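(* Let $\varepsilon>0$ and $\delta\in(0,1]$, and let $\pi_{\mathrm{opt}}$ be the optimal partition selection primitive for $(\varepsilon,\delta)$-differential privacy, i.e. the function $\mathbb{N}\to[0,1]$ given by $\pi_{\mathrm{opt}}(0)=0$ and $\pi_{\mathrm{opt}}(n+1)=\min\left(e^{\varepsilon}\pi_{\mathrm{opt}}(n)+\delta,\;1-e^{-\varepsilon}(1-\pi_{\mathrm{opt}}(n)-\delta),\;1\right)$ for $n\ge0$. Then there exist integers $n_1,n_2$ with $0<n_1\le n_2$ such that: $\pi_{\mathrm{opt}}(n)=e^{\varepsilon}\pi_{\mathrm{opt}}(n-1)+\delta$ for $0<n\le n_1$; $\pi_{\mathrm{opt}}(n)=1-e^{-\varepsilon}\left(1-\pi_{\mathrm{opt}}(n-1)-\delta\right)$ for $n_1<n\le n_2$; and $\pi_{\mathrm{opt}}(n)=1$ for $n>n_2$.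
   Context: $\mathbb{N}=\{0,1,2,\dots\}$. (The recurrence given characterizes the maximal function $\pi:\mathbb{N}\to[0,1]$ with $\pi(0)=0$ such that releasing a partition with $n$ users with probability $\pi(n)$ is $(\varepsilon,\delta)$-differentially private with respect to adding or removing one user.) *)

From Stdlib Require Import Reals.
Open Scope R_scope.

Fixpoint pi_opt (eps delta : R) (n : nat) : R :=
  match n with
  | O => 0
  | S m =>
      let p := pi_opt eps delta m in
      Rmin (Rmin (exp eps * p + delta) (1 - exp (- eps) * (1 - p - delta))) 1
  end.

From Stdlib Require Import Reals Lra Lia Classical Wf_nat.
Open Scope R_scope.

(* Write a = e^eps, b = e^-eps, f x = a x + delta and g x = 1 - b (1 - x - delta),
   so that pi_opt (n+1) = min (f (pi_opt n)) (g (pi_opt n)) 1.  Every branch of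
   this minimum lies above min (x + b delta) 1, so pi_opt is nondecreasing and
   reaches 1 after finitely many steps; once it is 1 it stays 1.  The difference
   f x - g x = (a - b) x - (1 - b)(1 - delta) is nondecreasing in x, so once a
   step does not follow f, no later step does.  Hence the steps following f form
   an initial segment, those equal to 1 a final segment, and each step in between
   is neither, so it follows g. *)

Lemma exp_gt_1 (x : R) : 0 < x -> 1 < exp x.
Proof. intros Hx; rewrite <- exp_0; apply exp_increasing; exact Hx. Qed.

Lemma exp_opp_lt_1 (x : R) : 0 < x -> exp (- x) < 1.
Proof. intros Hx; rewrite <- exp_0; apply exp_increasing; lra. Qed.

Lemma Rmin3_cases (x y z : R) :
  Rmin (Rmin x y) z = x \/ Rmin (Rmin x y) z = y \/ Rmin (Rmin x y) z = z.
Proof. unfold Rmin; repeat destruct Rle_dec; auto. Qed.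

Lemma Rmin3_glb (x y z w : R) : w <= x -> w <= y -> w <= z -> w <= Rmin (Rmin x y) z.
Proof. intros; repeat apply Rmin_glb; assumption. Qed.

Lemma upward_closed_threshold (P : nat -> Prop) :
  (forall n, P n -> P (S n)) -> (exists n, P n) ->
  exists n0, forall n, P n <-> (n0 <= n)%nat.
Proof.
  intros Hup Hex.
  destruct (dec_inh_nat_subset_has_unique_least_element P (fun n => classic (P n)) Hex)
    as [n0 [[HP0 Hleast] _]].
  exists n0; intros n; split; [apply Hleast|].
  intros Hle; induction Hle; auto.
Qed.

Section OptimalPartitionSelection.

Variables eps delta : R.
Hypothesis Heps : 0 < eps.
Hypothesis Hdelta : 0 < delta <= 1.

Local Notation a := (exp eps).
Local Notation b := (exp (- eps)).
Local Notation p := (pi_opt eps delta).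
Local Notation f x := (a * x + delta).
Local Notation g x := (1 - b * (1 - x - delta)).

Let Ha : 1 < a := exp_gt_1 eps Heps.
Let Hb : 0 < b < 1 := conj (exp_pos _) (exp_opp_lt_1 eps Heps).

Lemma pi_opt_S (n : nat) : p (S n) = Rmin (Rmin (f (p n)) (g (p n))) 1.
Proof. reflexivity. Qed.

Lemma pi_opt_S_le (n : nat) : p (S n) <= f (p n) /\ p (S n) <= g (p n) /\ p (S n) <= 1.
Proof.
  rewrite pi_opt_S.
  pose proof (Rmin_l (Rmin (f (p n)) (g (p n))) 1).
  pose proof (Rmin_l (f (p n)) (g (p n))).
  pose proof (Rmin_r (f (p n)) (g (p n))).
  pose proof (Rmin_r (Rmin (f (p n)) (g (p n))) 1).
  lra.
Qed.

Lemma pi_opt_bounds (n : nat) : 0 <= p n <= 1.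
Proof.
  induction n as [|n IH]; [simpl; lra|].
  split; [|apply pi_opt_S_le].
  rewrite pi_opt_S; apply Rmin3_glb; [| |lra].
  - pose proof (Rmult_le_pos a (p n) (Rlt_le _ _ (exp_pos eps)) (proj1 IH)); lra.
  - assert (b * (1 - p n - delta) <= b * 1) by (apply Rmult_le_compat_l; lra); lra.
Qed.

Lemma pi_opt_S_ge (n : nat) : Rmin (p n + b * delta) 1 <= p (S n).
Proof.
  pose proof (pi_opt_bounds n) as Hn.
  pose proof (Rmin_l (p n + b * delta) 1); pose proof (Rmin_r (p n + b * delta) 1).
  rewrite pi_opt_S; apply Rmin3_glb; [| |lra].
  - assert (p n <= a * p n) by nra.
    assert (b * delta <= delta) by nra.
    lra.
  - assert (0 <= (1 - b) * (1 - p n)) by nra; nra.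
Qed.

Lemma pi_opt_le_S (n : nat) : p n <= p (S n).
Proof.
  pose proof (pi_opt_bounds n); pose proof (pi_opt_S_ge n).
  assert (p n <= Rmin (p n + b * delta) 1) by (apply Rmin_glb; nra).
  lra.
Qed.

Lemma pi_opt_ge (n : nat) : Rmin (INR n * (b * delta)) 1 <= p n.
Proof.
  induction n as [|n IH].
  - simpl; rewrite Rmult_0_l, Rmin_left; lra.
  - eapply Rle_trans; [|apply pi_opt_S_ge].
    rewrite S_INR, Rmult_plus_distr_r, Rmult_1_l.
    eapply Rle_trans; [|apply Rle_min_compat_r, Rplus_le_compat_r, IH].
    unfold Rmin; repeat destruct Rle_dec; nra.
Qed.

Lemma pi_opt_reaches_1 : exists n, p n = 1.
Proof.
  destruct (INR_archimed (b * delta) 1) as [n Hn]; [nra|].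
  exists n.
  pose proof (pi_opt_ge n); pose proof (pi_opt_bounds n).
  rewrite Rmin_right in *; lra.
Qed.

Lemma pi_opt_1_S (n : nat) : p n = 1 -> p (S n) = 1.
Proof.
  intros E; rewrite pi_opt_S, E, Rmin_right; [reflexivity|].
  apply Rmin_glb; nra.
Qed.

Lemma pi_opt_1_not_f (n : nat) : p n = 1 -> p (S n) <> f (p n).
Proof. intros E; rewrite (pi_opt_1_S n E), E; lra. Qed.

Lemma pi_opt_1_eq_f : p 1 = f (p 0).
Proof.
  rewrite pi_opt_S; simpl pi_opt; rewrite Rmult_0_r, Rplus_0_l.
  assert (b * (1 - 0 - delta) <= 1 - delta) by nra.
  rewrite (Rmin_left delta), Rmin_left; [reflexivity|lra..].
Qed.

Lemma pi_opt_S_eq_g (n : nat) :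
  p (S n) <> 1 -> p (S n) <> f (p n) -> p (S n) = g (p n).
Proof.
  rewrite pi_opt_S; destruct (Rmin3_cases (f (p n)) (g (p n)) 1) as [E|[E|E]];
    rewrite E; tauto.
Qed.

Lemma pi_opt_not_f_S (n : nat) : p (S n) <> f (p n) -> p (S (S n)) <> f (p (S n)).
Proof.
  intros Hnf.
  destruct (Req_dec (p (S n)) 1) as [E|Hne]; [apply pi_opt_1_not_f, E|].
  pose proof (pi_opt_S_le n) as [Hf _].
  pose proof (pi_opt_S_le (S n)) as [_ [Hg' _]].
  pose proof (pi_opt_S_eq_g n Hne Hnf) as Hgn.
  assert (0 <= (a - b) * (p (S n) - p n)) by (pose proof (pi_opt_le_S n); nra).
  nra.
Qed.

End OptimalPartitionSelection.

Theorem lemma2 (eps delta : R) (Heps : 0 < eps) (Hdelta : 0 < delta <= 1) :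
  exists n1 n2 : nat,
    (0 < n1)%nat /\ (n1 <= n2)%nat /\
    (forall n : nat, (0 < n <= n1)%nat ->
       pi_opt eps delta n = exp eps * pi_opt eps delta (n - 1) + delta) /\
    (forall n : nat, (n1 < n <= n2)%nat ->
       pi_opt eps delta n =
         1 - exp (- eps) * (1 - pi_opt eps delta (n - 1) - delta)) /\
    (forall n : nat, (n2 < n)%nat -> pi_opt eps delta n = 1).
Proof.
  set (p := pi_opt eps delta).
  destruct (pi_opt_reaches_1 eps delta Heps Hdelta) as [m Hm].
  destruct (upward_closed_threshold (fun k => p (S k) <> exp eps * p k + delta))
    as [i0 Hi0].
  { exact (pi_opt_not_f_S eps delta Heps Hdelta). }
  { exists m; exact (pi_opt_1_not_f eps delta Heps Hdelta m Hm). }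
  destruct (upward_closed_threshold (fun k => p k = 1)) as [j0 Hj0].
  { exact (pi_opt_1_S eps delta Heps Hdelta). }
  { exists m; exact Hm. }
  assert (Hi0_pos : (0 < i0)%nat).
  { destruct i0; [|lia].
    destruct (proj2 (Hi0 0%nat) (le_n 0)); exact (pi_opt_1_eq_f eps delta Heps Hdelta). }
  assert (Hj0_pos : (0 < j0)%nat).
  { destruct j0; [|lia].
    assert (p 0%nat = 0) by reflexivity; pose proof (proj2 (Hj0 0%nat) (le_n 0)); lra. }
  exists i0, (Nat.max i0 (j0 - 1)).
  split; [exact Hi0_pos|]; split; [lia|]; split; [|split].
  - intros [|k] Hk; [lia|]; rewrite Nat.sub_1_r; simpl Nat.pred.
    apply NNPP; intros Hnf; apply Hi0 in Hnf; lia.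
  - intros [|k] Hk; [lia|]; rewrite Nat.sub_1_r; simpl Nat.pred.
    apply (pi_opt_S_eq_g eps delta Heps Hdelta).
    + intros E; apply Hj0 in E; lia.
    + apply Hi0; lia.
  - intros n Hn; apply Hj0; lia.
Qed.
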